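(* Let $\pi$ be the free group of rank two with presentation $\langle A_1,A_2,A_3\mid A_1A_2A_3=\mathbb{I}\rangle$, and let $\rho_0:\pi\to\mathsf{SO}(2,1)^0$ be a homomorphism such that each $\rho_0(A_i)$ ($i=1,2,3$) is hyperbolic or parabolic and $\rho_0(\pi)$ is not solvable. For each $i$ choose $\mathsf{v}_i\in\mathrm{Fix}(\rho_0(A_i))$ positive relative to $\rho_0(A_i)$, and define $\mu_i:H^1(\pi,V)\to\mathbb{R}$ by $\mu_i([u])=u(A_i)\cdot\mathsf{v}_i$ (the value of $(\rho(A_i)(x)-x)\cdot\mathsf{v}_i$ for the affine deformation $\rho$ with translational part $u$). Then $\mu=(\mu_1,\mu_2,\mu_3):H^1(\pi,V)\to\mathbb{R}^3$ is a well-defined linear isomorphism of vector spaces.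
   Context: $V=\mathbb{R}^3$ with the Lorentzian inner product $x\cdot y=x_1y_1+x_2y_2-x_3y_3$ and its standard orientation, regarded as a $\pi$-module via $\rho_0$; $\mathsf{SO}(2,1)^0$ is the identity component of its isometry group. $H^1(\pi,V)$ is group cohomology: cocycles $u:\pi\to V$ with $u(gh)=u(g)+\rho_0(g)u(h)$ modulo coboundaries $g\mapsto \rho_0(g)x-x$. A nonidentity $g\in\mathsf{SO}(2,1)^0$ is hyperbolic if it has three distinct real eigenvalues and parabolic if its only eigenvalue is $1$; then $\mathrm{Fix}(g)$ is a line. A vector $\mathsf{v}\in\mathrm{Fix}(g)$ is positive relative to $g$ if $(\mathsf{v},x,gx)$ is a positively oriented basis for any null ($x\cdot x=0$) or timelike ($x\cdot x<0$) vector $x$ that is not an eigenvector of $g$. An affine deformation with translational part $u$ is $\rho(g)(x)=\rho_0(g)x+u(g)$. *)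

From HB Require Import structures.
From mathcomp Require Import all_boot all_order all_algebra.
From mathcomp Require Import reals.
Set Implicit Arguments. Unset Strict Implicit. Unset Printing Implicit Defensive.
Import Order.TTheory GRing.Theory Num.Theory.
Local Open Scope ring_scope.

(* letters: (generator index among {A1, A2}, inverted?) *)
Definition letter := ('I_2 * bool)%type.
Definition linv (x : letter) : letter := (x.1, ~~ x.2).
Definition nocancel (x y : letter) : bool := y != linv x.
Definition reduced (w : seq letter) : bool := sorted nocancel w.

Definition cons_red (x : letter) (w : seq letter) : seq letter :=
  if w is y :: w' then (if y == linv x then w' else x :: w) else [:: x].
Definition red (w : seq letter) : seq letter := foldr cons_red [::] w.

Lemma cons_red_reduced x w : reduced w -> reduced (cons_red x w).
Proof.
case: w => [|y w] //= Hw; case: ifP => Hy.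
  by case: w Hw => //= z w /andP[].
by rewrite /reduced /= /nocancel Hy.
Qed.

Lemma red_reduced w : reduced (red w).
Proof. by elim: w => [|x w IH] //=; apply: cons_red_reduced. Qed.

Definition F2 := {w : seq letter | reduced w}.
Definition F2one : F2 := exist _ [::] isT.
Definition F2mul (g h : F2) : F2 := exist _ (red (sval g ++ sval h)) (red_reduced _).
Definition F2inv (g : F2) : F2 := exist _ (red (rev (map linv (sval g)))) (red_reduced _).
Definition F2gen (i : 'I_2) : F2 := exist _ (red [:: (i, false)]) (red_reduced _).

Definition A1 : F2 := F2gen 0.
Definition A2 : F2 := F2gen 1.
Definition A3 : F2 := F2inv (F2mul A1 A2).   (* so that A1 A2 A3 = 1 *)
Definition Agen (i : 'I_3) : F2 :=
  if (i : nat) == 0%N then A1 else if (i : nat) == 1%N then A2 else A3.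

Section Lorentz.
Variable R : realType.

Definition lor (x y : 'cV[R]_3) : R :=
  x (inord 0) 0 * y (inord 0) 0 + x (inord 1) 0 * y (inord 1) 0
  - x (inord 2) 0 * y (inord 2) 0.

Definition Jmx : 'M[R]_3 :=
  \matrix_(i < 3, j < 3) (if i == j then (if (i : nat) == 2%N then -1 else 1) else 0).

(* identity component SO(2,1)^0: Lorentz isometries of determinant 1
   preserving the future time cone (entry (3,3) positive) *)
Definition SO21_0 (M : 'M[R]_3) : Prop :=
  M^T *m Jmx *m M = Jmx /\ \det M = 1 /\ 0 < M (inord 2) (inord 2).

Definition hyperbolic (M : 'M[R]_3) : Prop :=
  M != 1%:M /\ exists a b c : R,
    [/\ eigenvalue M a, eigenvalue M b, eigenvalue M c & [/\ a != b, b != c & a != c]].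

(* the only (complex) eigenvalue is 1: characteristic polynomial (X-1)^3 *)
Definition parabolic (M : 'M[R]_3) : Prop :=
  M != 1%:M /\ char_poly M = ('X - 1%:P) ^+ 3.

Definition Fixv (M : 'M[R]_3) (v : 'cV[R]_3) : Prop := M *m v = v.

Definition det3 (a b c : 'cV[R]_3) : R :=
  \det (\matrix_(i < 3, j < 3)
          (if (j : nat) == 0%N then a i 0 else if (j : nat) == 1%N then b i 0 else c i 0)).

Definition is_eigenvector (M : 'M[R]_3) (x : 'cV[R]_3) : Prop :=
  x != 0 /\ exists a : R, M *m x = a *: x.

Definition positive_rel (M : 'M[R]_3) (v : 'cV[R]_3) : Prop :=
  forall x : 'cV[R]_3, x != 0 -> lor x x <= 0 -> ~ is_eigenvector M x ->
    0 < det3 v x (M *m x).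

Definition is_hom (rho : F2 -> 'M[R]_3) : Prop :=
  forall g h, rho (F2mul g h) = rho g *m rho h.

Definition comm_mx (a b : 'M[R]_3) : 'M[R]_3 := a *m b *m invmx a *m invmx b.

Inductive gen_by (P : 'M[R]_3 -> Prop) : 'M[R]_3 -> Prop :=
| gen_one : gen_by P 1%:M
| gen_in m : P m -> gen_by P m
| gen_mul m n : gen_by P m -> gen_by P n -> gen_by P (m *m n)
| gen_inv m : gen_by P m -> gen_by P (invmx m).

Fixpoint derived (S : 'M[R]_3 -> Prop) (k : nat) : 'M[R]_3 -> Prop :=
  match k with
  | 0%N => S
  | k'.+1 => gen_by (fun m => exists a b, derived S k' a /\ derived S k' b /\ m = comm_mx a b)
  end.

Definition solvable_mx (S : 'M[R]_3 -> Prop) : Prop :=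
  exists k, forall m, derived S k m -> m = 1%:M.

Definition image_rho (rho : F2 -> 'M[R]_3) (m : 'M[R]_3) : Prop := exists g, m = rho g.

Definition cocycle (rho : F2 -> 'M[R]_3) (u : F2 -> 'cV[R]_3) : Prop :=
  forall g h, u (F2mul g h) = u g + rho g *m u h.

Definition coboundary (rho : F2 -> 'M[R]_3) (u : F2 -> 'cV[R]_3) : Prop :=
  exists x : 'cV[R]_3, forall g, u g = rho g *m x - x.

Definition mu (v : 'I_3 -> 'cV[R]_3) (u : F2 -> 'cV[R]_3) : 'cV[R]_3 :=
  \col_(i < 3) lor (u (Agen i)) (v i).

End Lorentz.

From Pilot Require Import Defs.
From HB Require Import structures.
From mathcomp Require Import all_boot all_order all_algebra.
From mathcomp Require Import reals ring lra.
From Stdlib Require Import Classical_Prop.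
Set Implicit Arguments. Unset Strict Implicit. Unset Printing Implicit Defensive.
Import Order.TTheory GRing.Theory Num.Theory.
Local Open Scope ring_scope.

(* Since pi is free on A1, A2, a cocycle is an arbitrary choice of (u A1, u A2)
   in V^2, and the coboundaries are the image of x |-> (A1 x - x, A2 x - x).
   That map is injective: two elements of SO(2,1) fixing the same nonzero
   vector commute (both are polynomials in the infinitesimal rotation about
   it), so a common fixed vector would make rho0(pi) abelian.  Hence H^1 has
   dimension 3.  On cocycles mu is a linear map V^2 -> R^3 that kills the
   coboundaries, because v_i is fixed by A_i and rho0 preserves the form.  Its
   transpose is injective: a linear relation among its rows makes v3
   proportional to v1, hence fixed by A1 and then by A2 = A1^-1 A3^-1, while
   each v_i is nonzero because positivity relative to a nonidentity element
   fails for the zero vector.  A dimension count finishes. *)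

Ltac case_ord3 := let i := fresh "i" in let Hi := fresh "Hi" in
  case=> [[|[|[|i]]] Hi] //=.

Section Coordinates.
Variable R : comPzRingType.

Definition mk3 (a b c d e f g h k : R) : 'M[R]_3 :=
  \matrix_(i < 3, j < 3) nth 0 (nth [::] [:: [:: a; b; c]; [:: d; e; f]; [:: g; h; k]] i) j.
Definition mkv (a b c : R) : 'cV[R]_3 := \col_(i < 3) nth 0 [:: a; b; c] i.

Lemma mk3_ex (M : 'M[R]_3) : exists a b c d e f g h k, M = mk3 a b c d e f g h k.
Proof.
pose m i j := M (inord i) (inord j).
exists (m 0 0), (m 0 1), (m 0 2), (m 1 0), (m 1 1), (m 1 2), (m 2 0), (m 2 1), (m 2 2).
apply/matrixP => i j; rewrite mxE /m.
by move: i j; case_ord3; case_ord3; congr (M _ _); apply: val_inj; rewrite /= inordK.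
Qed.

Lemma mkv_ex (x : 'cV[R]_3) : exists a b c, x = mkv a b c.
Proof.
exists (x (inord 0) 0), (x (inord 1) 0), (x (inord 2) 0).
apply/matrixP => i j; rewrite mxE (ord1 j).
by move: i; case_ord3; congr (x _ _); apply: val_inj; rewrite /= inordK.
Qed.

Lemma mul_mk3 a b c d e f g h k a' b' c' d' e' f' g' h' k' :
  mk3 a b c d e f g h k *m mk3 a' b' c' d' e' f' g' h' k' =
  mk3 (a*a'+b*d'+c*g') (a*b'+b*e'+c*h') (a*c'+b*f'+c*k')
      (d*a'+e*d'+f*g') (d*b'+e*e'+f*h') (d*c'+e*f'+f*k')
      (g*a'+h*d'+k*g') (g*b'+h*e'+k*h') (g*c'+h*f'+k*k').
Proof.
apply/matrixP => i j; rewrite !mxE !big_ord_recl big_ord0 !mxE /=.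
by move: i j; case_ord3; case_ord3; ring.
Qed.

Lemma mul_mk3_mkv a b c d e f g h k x y z :
  mk3 a b c d e f g h k *m mkv x y z = mkv (a*x+b*y+c*z) (d*x+e*y+f*z) (g*x+h*y+k*z).
Proof.
apply/matrixP => i j; rewrite !mxE !big_ord_recl big_ord0 !mxE /=.
by move: i; case_ord3; ring.
Qed.

Lemma tr_mk3 a b c d e f g h k : (mk3 a b c d e f g h k)^T = mk3 a d g b e h c f k.
Proof. by apply/matrixP => i j; rewrite !mxE; move: i j; case_ord3; case_ord3. Qed.

Lemma add_mk3 a b c d e f g h k a' b' c' d' e' f' g' h' k' :
  mk3 a b c d e f g h k + mk3 a' b' c' d' e' f' g' h' k' =
  mk3 (a+a') (b+b') (c+c') (d+d') (e+e') (f+f') (g+g') (h+h') (k+k').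
Proof. by apply/matrixP => i j; rewrite !mxE; move: i j; case_ord3; case_ord3. Qed.

Lemma scalar_mk3 s : s%:M = mk3 s 0 0 0 s 0 0 0 s.
Proof. by apply/matrixP => i j; rewrite !mxE; move: i j; case_ord3; case_ord3. Qed.

Lemma add_mkv x y z x' y' z' : mkv x y z + mkv x' y' z' = mkv (x+x') (y+y') (z+z').
Proof. by apply/matrixP => i j; rewrite !mxE; move: i; case_ord3. Qed.

Lemma scale_mkv s x y z : s *: mkv x y z = mkv (s*x) (s*y) (s*z).
Proof. by apply/matrixP => i j; rewrite !mxE; move: i; case_ord3. Qed.

Lemma mkv000 : mkv 0 0 0 = 0.
Proof. by apply/matrixP => i j; rewrite !mxE; move: i; case_ord3. Qed.

Lemma mk3_inj a b c d e f g h k a' b' c' d' e' f' g' h' k' :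
  mk3 a b c d e f g h k = mk3 a' b' c' d' e' f' g' h' k' ->
  [/\ a = a', b = b', c = c', d = d' & [/\ e = e', f = f', g = g', h = h' & k = k']].
Proof.
move/matrixP => E.
have Eij i j (Hi : (i < 3)%N) (Hj : (j < 3)%N) := E (Ordinal Hi) (Ordinal Hj).
move: (Eij 0 0 isT isT) (Eij 0 1 isT isT) (Eij 0 2 isT isT) (Eij 1 0 isT isT)
  (Eij 1 1 isT isT) (Eij 1 2 isT isT) (Eij 2 0 isT isT) (Eij 2 1 isT isT) (Eij 2 2 isT isT).
by rewrite !mxE.
Qed.

Lemma mkv_inj x y z x' y' z' : mkv x y z = mkv x' y' z' -> [/\ x = x', y = y' & z = z'].
Proof.
move/matrixP => E; have Ei i (Hi : (i < 3)%N) := E (Ordinal Hi) ord0.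
by move: (Ei 0 isT) (Ei 1 isT) (Ei 2 isT); rewrite !mxE.
Qed.

Lemma det_mk3 a b c d e f g h k :
  \det (mk3 a b c d e f g h k) = a*(e*k-f*h) - b*(d*k-f*g) + c*(d*h-e*g).
Proof.
rewrite (expand_det_row _ ord0) !big_ord_recl big_ord0 /cofactor.
rewrite !(expand_det_row _ ord0) !big_ord_recl !big_ord0 /cofactor !det_mx11 !mxE /=.
rewrite /bump /=; ring.
Qed.

Lemma adj_mk3 a b c d e f g h k :
  \adj (mk3 a b c d e f g h k) = mk3 (e*k-f*h) (c*h-b*k) (b*f-c*e)
                                     (f*g-d*k) (a*k-c*g) (c*d-a*f)
                                     (d*h-e*g) (b*g-a*h) (a*e-b*d).
Proof.
apply/matrixP => i j; rewrite !mxE /cofactor.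
rewrite !(expand_det_row _ ord0) !big_ord_recl !big_ord0 /cofactor !det_mx11 !mxE /=.
by move: i j; case_ord3; case_ord3; rewrite /bump /=; ring.
Qed.

Definition colm (p q r : 'cV[R]_3) : 'M[R]_3 := \matrix_(i < 3, j < 3)
  (if (j : nat) == 0%N then p i 0 else if (j : nat) == 1%N then q i 0 else r i 0).

Lemma colm_mkv a b c d e f g h k :
  colm (mkv a b c) (mkv d e f) (mkv g h k) = mk3 a d g b e h c f k.
Proof. by apply/matrixP => i j; rewrite !mxE; move: i j; case_ord3; case_ord3. Qed.

Lemma mul_colm (A : 'M[R]_3) p q r : A *m colm p q r = colm (A *m p) (A *m q) (A *m r).
Proof.
have [a [b [c [d [e [f [g [h [k ->]]]]]]]]] := mk3_ex A.
have [p1 [p2 [p3 ->]]] := mkv_ex p; have [q1 [q2 [q3 ->]]] := mkv_ex q.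
have [r1 [r2 [r3 ->]]] := mkv_ex r.
rewrite !mul_mk3_mkv !colm_mkv mul_mk3; congr mk3; ring.
Qed.

Lemma mul_colm_mkv p q r x y z : colm p q r *m mkv x y z = x *: p + y *: q + z *: r.
Proof.
have [p1 [p2 [p3 ->]]] := mkv_ex p; have [q1 [q2 [q3 ->]]] := mkv_ex q.
have [r1 [r2 [r3 ->]]] := mkv_ex r.
by rewrite colm_mkv mul_mk3_mkv !scale_mkv !add_mkv; congr mkv; ring.
Qed.

End Coordinates.

Lemma commute_cyclic_horner (F : fieldType) (M K : 'M[F]_3) (y : 'cV[F]_3) :
  M *m K = K *m M -> \det (colm y (K *m y) (K *m (K *m y))) != 0 ->
  exists p : {poly F}, M = horner_mx K p.
Proof.
move=> MK detB.
pose B := colm y (K *m y) (K *m (K *m y)).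
have Bu : B \in unitmx by rewrite unitmxE unitfE.
have [c0 [c1 [c2 Ec]]] := mkv_ex (invmx B *m (M *m y)).
pose p : {poly F} := c0%:P + c1%:P * 'X + c2%:P * ('X * 'X).
pose P := horner_mx K p.
have PE : P = c0%:M + c1%:M *m K + c2%:M *m (K *m K).
  by rewrite /P /p !rmorphD !rmorphM /= !horner_mx_C horner_mx_X -!mulmxE.
have PK : P *m K = K *m P.
  by rewrite /P -{2 3}(horner_mx_X K) !mulmxE -!rmorphM /= mulrC.
have Py : P *m y = M *m y.
  rewrite -(mulKVmx Bu (M *m y)) Ec mul_colm_mkv PE !mulmxDl -!mulmxA !mul_scalar_mx.
  by rewrite !scalemxAl.
exists p; rewrite -(mulmxK Bu M) -(mulmxK Bu (horner_mx K p)) -/P; congr (_ *m _).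
have commute_on (z : 'cV[F]_3) (N : 'M_3) : N *m K = K *m N -> N *m (K *m z) = K *m (N *m z).
  by move=> NK; rewrite !mulmxA NK.
by rewrite /B !mul_colm !(commute_on _ M) // !(commute_on _ P) // Py.
Qed.

Lemma mulmx_cV_eq0 (F : fieldType) m n (A : 'M[F]_(m, n)) :
  (forall x : 'cV[F]_n, A *m x = 0) -> A = 0.
Proof.
move=> A0; apply/matrixP => i j.
by have := congr1 (fun y : 'cV_m => y i 0) (A0 (delta_mx j 0)); rewrite -colE !mxE.
Qed.

Lemma injective_complex_exact (F : fieldType) m n
    (L : 'M[F]_(n, m + n)) (D : 'M[F]_(m + n, m)) :
  (forall x : 'cV[F]_m, D *m x = 0 -> x = 0) ->
  (forall z : 'cV[F]_n, L^T *m z = 0 -> z = 0) ->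
  L *m D = 0 ->
  (forall t : 'cV[F]_n, exists w, L *m w = t) /\
  (forall w : 'cV[F]_(m + n), L *m w = 0 -> exists x, w = D *m x).
Proof.
move=> D_inj LT_inj LD0.
have freeL : row_free L.
  apply/inj_row_free => z /(congr1 trmx); rewrite trmx_mul trmx0 => /LT_inj.
  by move/(congr1 trmx); rewrite trmxK trmx0.
have freeDT : row_free D^T.
  apply/inj_row_free => x /(congr1 trmx); rewrite trmx_mul trmxK trmx0 => /D_inj.
  by move/(congr1 trmx); rewrite trmxK trmx0.
have rankLT : \rank L^T = n by rewrite mxrank_tr; apply/eqP: freeL.
have DL0 : D^T *m L^T = 0 by rewrite -trmx_mul LD0 trmx0.
have sub_ker : (D^T <= kermx L^T)%MS by apply/sub_kermxP.
have ker_sub : (kermx L^T <= D^T)%MS.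
  by rewrite -(mxrank_leqif_sup sub_ker).2 // mxrank_ker rankLT addnK; apply: freeDT.
split=> [t | w Lw0].
- have : (t^T <= L^T)%MS by apply: submx_full; rewrite /row_full rankLT.
  case/submxP=> w' Ew'; exists w'^T.
  by rewrite -[L]trmxK -trmx_mul -Ew' trmxK.
- have : (w^T <= D^T)%MS.
    by apply: submx_trans ker_sub; apply/sub_kermxP; rewrite -trmx_mul Lw0 trmx0.
  case/submxP=> x' Ex'; exists x'^T.
  by rewrite -[D]trmxK -trmx_mul -Ex' trmxK.
Qed.

Section LorentzCoordinates.
Variable R : realType.
Implicit Types (M : 'M[R]_3) (x y : 'cV[R]_3).

Lemma Jmx_mk3 : Jmx R = mk3 1 0 0 0 1 0 0 0 (-1).
Proof. by apply/matrixP => i j; rewrite !mxE; move: i j; case_ord3; case_ord3. Qed.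

Lemma lor_mkv (a b c d e f : R) : lor (mkv a b c) (mkv d e f) = a*d + b*e - c*f.
Proof. by rewrite /lor !mxE !inordK. Qed.

Lemma det3_mkv (a b c d e f g h k : R) :
  det3 (mkv a b c) (mkv d e f) (mkv g h k) = a*(e*k-h*f) - d*(b*k-h*c) + g*(b*f-e*c).
Proof. by rewrite /det3 -[X in \det X]/(colm _ _ _) colm_mkv det_mk3; ring. Qed.

Definition crossmx x : 'M[R]_3 :=
  mk3 0 (- x (inord 2) 0) (x (inord 1) 0) (x (inord 2) 0) 0 (- x (inord 0) 0)
      (- x (inord 1) 0) (x (inord 0) 0) 0.

(* y |-> lorcross x *m y is the Lorentzian cross product with x, the
   infinitesimal rotation about x. *)
Definition lorcross x := Jmx R *m crossmx x.

Lemma crossmx_mkv (p q r : R) : crossmx (mkv p q r) = mk3 0 (-r) q r 0 (-p) (-q) p 0.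
Proof. by rewrite /crossmx !mxE !inordK. Qed.

End LorentzCoordinates.

Ltac mk3_simpl := rewrite ?(crossmx_mkv, Jmx_mk3, mul_mk3_mkv, mul_mk3, tr_mk3, adj_mk3,
   add_mk3, scalar_mk3, add_mkv, scale_mkv, lor_mkv, det3_mkv, det_mk3).

Section LorentzForm.
Variable R : realType.
Implicit Types (M : 'M[R]_3) (x y z : 'cV[R]_3).

Lemma lorDl x y z : lor (x + y) z = lor x z + lor y z.
Proof.
have [a [b [c ->]]] := mkv_ex x; have [d [e [f ->]]] := mkv_ex y.
have [g [h [k ->]]] := mkv_ex z; mk3_simpl; ring.
Qed.

Lemma lorZl s x y : lor (s *: x) y = s * lor x y.
Proof.
have [a [b [c ->]]] := mkv_ex x; have [d [e [f ->]]] := mkv_ex y; mk3_simpl; ring.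
Qed.

Lemma lorNl x y : lor (- x) y = - lor x y.
Proof. by rewrite -scaleN1r lorZl mulN1r. Qed.

Lemma lorBl x y z : lor (x - y) z = lor x z - lor y z.
Proof. by rewrite lorDl lorNl. Qed.

Lemma lorC x y : lor x y = lor y x.
Proof. by have [a [b [c ->]]] := mkv_ex x; have [d [e [f ->]]] := mkv_ex y; mk3_simpl; ring. Qed.

Lemma lorNr x y : lor x (- y) = - lor x y.
Proof. by rewrite lorC -scaleN1r lorZl lorC mulN1r. Qed.

Lemma lorr0 x : lor x 0 = 0.
Proof. by have [a [b [c ->]]] := mkv_ex x; rewrite -mkv000 lor_mkv; ring. Qed.

Lemma lorE x y : lor x y = (x^T *m Jmx R *m y) 0 0.
Proof.
have [a [b [c ->]]] := mkv_ex x; have [d [e [f ->]]] := mkv_ex y.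
rewrite Jmx_mk3 lor_mkv !(mxE, big_ord_recl, big_ord0) /=; ring.
Qed.

Lemma lor_SO21 M x y : SO21_0 M -> lor (M *m x) (M *m y) = lor x y.
Proof.
by case=> HM _; rewrite !lorE trmx_mul -[in RHS]HM !mulmxA.
Qed.

Lemma Jmx_invo : Jmx R *m Jmx R = 1%:M.
Proof. by rewrite Jmx_mk3 mul_mk3 scalar_mk3; congr (mk3 _ _ _ _ _ _ _ _ _); ring. Qed.

Lemma Jmx_inj x : Jmx R *m x = 0 -> x = 0.
Proof. by move=> Jx; rewrite -(mul1mx x) -Jmx_invo -mulmxA Jx mulmx0. Qed.

End LorentzForm.

Section CausalEigenvectors.
Variable R : realType.
Implicit Types (M : 'M[R]_3) (x y : 'cV[R]_3).

Lemma SO21_causal_eigen_id M :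
  SO21_0 M -> (forall x, x != 0 -> lor x x <= 0 -> exists l, M *m x = l *: x) ->
  M = 1%:M.
Proof.
move=> [HM [_ HM22]] eigen.
have mkv_neq0 (a b c : R) : c != 0 -> mkv a b c != 0.
  move=> c0; apply: contraNneq c0 => /(congr1 (fun x => x (inord 2) 0)).
  by rewrite !mxE inordK //= => ->.
have two_neq0 : (2 : R) != 0 by rewrite pnatr_eq0.
have [l1 E1] := eigen (mkv 0 0 1) (mkv_neq0 _ _ _ (oner_neq0 _)) ltac:(rewrite lor_mkv; lra).
have [l2 E2] := eigen (mkv 1 0 2) (mkv_neq0 _ _ _ two_neq0) ltac:(rewrite lor_mkv; lra).
have [l3 E3] := eigen (mkv 0 1 2) (mkv_neq0 _ _ _ two_neq0) ltac:(rewrite lor_mkv; lra).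
have [l4 E4] := eigen (mkv 1 1 2) (mkv_neq0 _ _ _ two_neq0) ltac:(rewrite lor_mkv; lra).
have [a [b [c [d [e [f [g [h [k EM]]]]]]]]] := mk3_ex M; subst M.
move: E1 E2 E3 E4; mk3_simpl.
move=> /mkv_inj[e1 e2 e3] /mkv_inj[e4 e5 e6] /mkv_inj[e7 e8 e9] /mkv_inj[e10 e11 e12].
move: HM HM22; mk3_simpl; rewrite mxE !inordK //= => /mk3_inj[q1 _ _ _ _] k_gt0.
have [ak ek d0 g0] : [/\ a = k, e = k, d = 0 & g = 0] by split; lra.
have k1 : k = 1 by move: q1; rewrite ak d0 g0 => q1; nra.
have [b0 c0 f0 h0] : [/\ b = 0, c = 0, f = 0 & h = 0] by split; lra.
by rewrite ak ek d0 g0 k1 b0 c0 f0 h0.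
Qed.

Lemma det3_0l x y : det3 0 x y = 0.
Proof.
have [a [b [c ->]]] := mkv_ex x; have [d [e [f ->]]] := mkv_ex y.
by rewrite -mkv000; mk3_simpl; ring.
Qed.

Lemma positive_rel_neq0 M v : SO21_0 M -> M != 1%:M -> positive_rel M v -> v != 0.
Proof.
move=> HM M1 Mv; apply: contraNneq M1 => v0; apply/eqP/SO21_causal_eigen_id => // x x0 xc.
apply: NNPP => not_eigen; suff : 0 < det3 v x (M *m x) by rewrite v0 det3_0l ltxx.
by apply: Mv => // -[_ [l Ml]]; apply: not_eigen; exists l.
Qed.

End CausalEigenvectors.

Section Stabilizer.
Variable R : realType.
Implicit Types (M N : 'M[R]_3) (x y : 'cV[R]_3).

Lemma adj_SO21 M : SO21_0 M -> \adj M = Jmx R *m M^T *m Jmx R.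
Proof.
move=> [HM [detM _]].
have inv_left : (Jmx R *m M^T *m Jmx R) *m M = 1%:M.
  by rewrite -!mulmxA (mulmxA M^T) HM Jmx_invo.
by rewrite -[\adj M]mulmx1 -(mulmx1C inv_left) mulmxA mul_adj_mx detM mul1mx.
Qed.

Lemma SO21_lorcross M x : SO21_0 M -> M *m lorcross x = lorcross (M *m x) *m M.
Proof.
move=> HM.
have cross_adj : crossmx (M *m x) *m M = (\adj M)^T *m crossmx x.
  have [a [b [c [d [e [f [g [h [k ->]]]]]]]]] := mk3_ex M.
  have [p [q [r ->]]] := mkv_ex x.
  (* Otherwise mul_mk3 fires first and unfolds crossmx applied to M *m x. *)
  rewrite mul_mk3_mkv; mk3_simpl; congr (mk3 _ _ _ _ _ _ _ _ _); ring.
rewrite /lorcross -mulmxA cross_adj adj_SO21 //.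
have [a [b [c [d [e [f [g [h [k ->]]]]]]]]] := mk3_ex M.
by have [p [q [r ->]]] := mkv_ex x; mk3_simpl; congr (mk3 _ _ _ _ _ _ _ _ _); ring.
Qed.

Lemma det_lorcross_orbit x y :
  \det (colm y (lorcross x *m y) (lorcross x *m (lorcross x *m y))) =
  lor x y * (lor x x * lor y y - lor x y ^+ 2).
Proof.
have [a [b [c ->]]] := mkv_ex x; have [p [q [r ->]]] := mkv_ex y.
by rewrite /lorcross; mk3_simpl; rewrite colm_mkv; mk3_simpl; ring.
Qed.

Lemma lorcross_cyclic x : x != 0 ->
  exists y, \det (colm y (lorcross x *m y) (lorcross x *m (lorcross x *m y))) != 0.
Proof.
have [a [b [c ->]]] := mkv_ex x => x0.
have sqr_add_neq0 (s t : R) : (s != 0) || (t != 0) -> s ^+ 2 + t ^+ 2 != 0.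
  by rewrite paddr_eq0 ?sqr_ge0 // !sqrf_eq0 negb_and.
have [c0|c0] := eqVneq c 0.
  have ab0 : (a != 0) || (b != 0).
    by apply: contraNT x0; rewrite negb_or !negbK c0 => /andP[/eqP-> /eqP->]; rewrite mkv000.
  exists (mkv a b 1); rewrite det_lorcross_orbit !lor_mkv c0.
  have -> : (a * a + b * b - 0 * 1) * ((a * a + b * b - 0 * 0) * (a * a + b * b - 1 * 1) -
     (a * a + b * b - 0 * 1) ^+ 2) = - ((a ^+ 2 + b ^+ 2) * (a ^+ 2 + b ^+ 2)) by ring.
  by rewrite oppr_eq0 mulf_neq0 // sqr_add_neq0.
have [/andP[/eqP a0 /eqP b0]|ab0] := boolP ((a == 0) && (b == 0)).
  exists (mkv 1 0 1); rewrite det_lorcross_orbit !lor_mkv a0 b0.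
  have -> : (0 * 1 + 0 * 0 - c * 1) * ((0 * 0 + 0 * 0 - c * c) * (1 * 1 + 0 * 0 - 1 * 1) -
     (0 * 1 + 0 * 0 - c * 1) ^+ 2) = c ^+ 3 by ring.
  by rewrite expf_neq0.
exists (mkv a b (- c)); rewrite det_lorcross_orbit !lor_mkv.
have -> : (a * a + b * b - c * - c) * ((a * a + b * b - c * c) * (a * a + b * b - - c * - c) -
     (a * a + b * b - c * - c) ^+ 2) =
   (a ^+ 2 + b ^+ 2 + c ^+ 2) * (c ^+ 2 * (a ^+ 2 + b ^+ 2)) * (-4) by ring.
have abc0 : a ^+ 2 + b ^+ 2 + c ^+ 2 != 0.
  by rewrite paddr_eq0 ?addr_ge0 ?sqr_ge0 // sqrf_eq0 (negPf c0) andbF.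
by rewrite !mulf_neq0 ?expf_neq0 ?sqr_add_neq0 -?negb_and // oppr_eq0 pnatr_eq0.
Qed.

Lemma SO21_fix_commute M N x : SO21_0 M -> SO21_0 N -> x != 0 ->
  M *m x = x -> N *m x = x -> M *m N = N *m M.
Proof.
move=> HM HN x0 Mx Nx.
have [y cyc_y] := lorcross_cyclic x0.
have MK : M *m lorcross x = lorcross x *m M by rewrite SO21_lorcross // Mx.
have NK : N *m lorcross x = lorcross x *m N by rewrite SO21_lorcross // Nx.
have [p ->] := commute_cyclic_horner MK cyc_y.
have [q ->] := commute_cyclic_horner NK cyc_y.
by rewrite mulmxE -!rmorphM mulrC.
Qed.
End Stabilizer.

Definition F2letter (l : letter) : F2 := exist _ [:: l] (isT : reduced [:: l]).

Lemma F2_inj (g h : F2) : sval g = sval h -> g = h.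
Proof. by case: g h => [w Hw] [w' Hw'] /= E; subst; congr exist; apply: bool_irrelevance. Qed.

Lemma red_id w : reduced w -> red w = w.
Proof.
elim: w => // x w IH Hw /=; rewrite IH; last exact: path_sorted Hw.
by case: w {IH} Hw => //= y w /andP[/negbTE-> _].
Qed.

Lemma F2_letter_ind (P : F2 -> Prop) :
  P F2one -> (forall l g, P g -> P (F2mul (F2letter l) g)) -> forall g, P g.
Proof.
move=> P1 PS [w]; elim: w => [|l w IH] Hw.
  by have -> : exist _ [::] Hw = F2one by apply: F2_inj.
have Hw' : reduced w := path_sorted Hw.
have -> : exist _ (l :: w) Hw = F2mul (F2letter l) (exist _ w Hw').
  exact/F2_inj/esym/red_id.
exact/PS/IH.
Qed.

Lemma linvK : involutive linv.
Proof. by case=> i b; rewrite /linv negbK. Qed.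

Lemma F2letterV l : F2mul (F2letter l) (F2letter (linv l)) = F2one.
Proof. by apply: F2_inj; rewrite /= eqxx. Qed.

Lemma A1E : A1 = F2letter (0, false). Proof. exact: F2_inj. Qed.
Lemma A2E : A2 = F2letter (1, false). Proof. exact: F2_inj. Qed.
Lemma A3E : A3 = F2mul (F2letter (1, true)) (F2letter (0, true)). Proof. exact: F2_inj. Qed.
Lemma A1A2A3 : F2mul A1 (F2mul A2 A3) = F2one. Proof. exact: F2_inj. Qed.

Lemma F2letter_gen (i : 'I_2) : F2letter (i, false) = A1 \/ F2letter (i, false) = A2.
Proof.
by case: i => [[|[|i]] Hi] //; [left | right]; apply: F2_inj => /=;
  congr [:: (_, _)]; apply: val_inj.
Qed.

Lemma SO21_unit (R : realType) (M : 'M[R]_3) : SO21_0 M -> M \in unitmx.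
Proof. by case=> _ [detM _]; rewrite unitmxE detM unitr1. Qed.

Section Representation.
Variable R : realType.
Variable rho : F2 -> 'M[R]_3.
Hypothesis rho_hom : is_hom rho.
Hypothesis rho_unit : forall g, rho g \in unitmx.

Lemma hom_one : rho F2one = 1%:M.
Proof.
have E : rho F2one = rho F2one *m rho F2one by rewrite -rho_hom; congr rho; apply: F2_inj.
by rewrite -(mulmxV (rho_unit F2one)) {2}E -mulmxA mulmxV ?mulmx1.
Qed.

Lemma hom_letterV l : rho (F2letter l) *m rho (F2letter (linv l)) = 1%:M.
Proof. by rewrite -rho_hom F2letterV hom_one. Qed.

Lemma fixed_by_generators (x : 'cV[R]_3) :
  rho A1 *m x = x -> rho A2 *m x = x -> forall g, rho g *m x = x.
Proof.
move=> x1 x2; apply: F2_letter_ind => [|[i []] g IH]; first by rewrite hom_one mul1mx.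
all: rewrite rho_hom -mulmxA IH.
  have xi : rho (F2letter (i, false)) *m x = x by case: (F2letter_gen i) => ->.
  by rewrite -{1}xi mulmxA (hom_letterV (i, true)) mul1mx.
by case: (F2letter_gen i) => ->.
Qed.

Lemma commutative_image_solvable :
  (forall g h, rho g *m rho h = rho h *m rho g) -> solvable_mx (image_rho rho).
Proof.
move=> rhoC; exists 1%N => m /=.
elim=> [|_ [_ [_ [[g ->] [[h ->] ->]]]] | m1 m2 _ -> _ -> | _ _ ->].
- by [].
- by rewrite /Defs.comm_mx rhoC (mulmxK (rho_unit g)) mulmxV.
- by rewrite mulmx1.
- by rewrite invmx1.
Qed.

Lemma cocycle_one u : cocycle rho u -> u F2one = 0.
Proof.
move=> Hu; have : u F2one + u F2one = u F2one + 0.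
  by rewrite -{2}(mul1mx (u F2one)) -hom_one -Hu addr0; congr u; apply: F2_inj.
exact: addrI.
Qed.

Lemma cocycle_letterV u l : cocycle rho u ->
  u (F2letter (linv l)) = - (rho (F2letter (linv l)) *m u (F2letter l)).
Proof.
move=> Hu; apply/eqP; rewrite -addr_eq0 -Hu.
by rewrite -{2}(linvK l) F2letterV cocycle_one.
Qed.

Lemma cocycle_eq0 u : cocycle rho u -> u A1 = 0 -> u A2 = 0 -> forall g, u g = 0.
Proof.
move=> Hu u1 u2; apply: F2_letter_ind => [|[i []] g IH]; first exact: cocycle_one.
all: rewrite Hu IH mulmx0 addr0.
  rewrite (cocycle_letterV (i, false)) //.
  by case: (F2letter_gen i) => ->; rewrite ?u1 ?u2 mulmx0 oppr0.
by case: (F2letter_gen i) => ->.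
Qed.

Lemma coboundary_cocycle (x : 'cV[R]_3) : cocycle rho (fun g => rho g *m x - x).
Proof. by move=> g h; rewrite rho_hom mulmxBr -mulmxA [in RHS]addrC addrA subrK. Qed.

Lemma cocycleB u u' : cocycle rho u -> cocycle rho u' -> cocycle rho (fun g => u g - u' g).
Proof. by move=> Hu Hu' g h; rewrite Hu Hu' mulmxBr opprD addrACA. Qed.

End Representation.

Lemma nonsolvable_no_common_fix (R : realType) (rho : F2 -> 'M[R]_3) :
  is_hom rho -> (forall g, SO21_0 (rho g)) -> ~ solvable_mx (image_rho rho) ->
  forall x : 'cV[R]_3, rho A1 *m x = x -> rho A2 *m x = x -> x = 0.
Proof.
move=> rho_hom rho_SO nonsolv x x1 x2; have [//|x0] := eqVneq x 0; case: nonsolv.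
have rho_unit g := SO21_unit (rho_SO g).
apply: commutative_image_solvable => // g h.
by apply: (SO21_fix_commute (rho_SO g) (rho_SO h) x0); apply: fixed_by_generators.
Qed.

Section CocycleOfGenerators.
Variable R : realType.
Variable rho : F2 -> 'M[R]_3.
Hypothesis rho_hom : is_hom rho.
Hypothesis rho_unit : forall g, rho g \in unitmx.
Variables a b : 'cV[R]_3.

Definition affmul (p q : 'M[R]_3 * 'cV[R]_3) := (p.1 *m q.1, p.2 + p.1 *m q.2).
Definition aff1 : 'M[R]_3 * 'cV[R]_3 := (1%:M, 0).

Lemma affmulA p q r : affmul p (affmul q r) = affmul (affmul p q) r.
Proof. by rewrite /affmul /= !mulmxA mulmxDr addrA mulmxA. Qed.

Lemma aff1mul p : affmul aff1 p = p.
Proof. by case: p => M t; rewrite /affmul /= !mul1mx add0r. Qed.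

(* Translational parts a, b at the generators; an inverse letter gets the
   translation of the inverse affine map. *)
Definition letter_translation (l : letter) :=
  let t := if (l.1 : nat) == 0%N then a else b in
  if l.2 then - (rho (F2letter l) *m t) else t.
Definition affine_letter l := (rho (F2letter l), letter_translation l).
Definition affine_word (w : seq letter) := foldr (affmul \o affine_letter) aff1 w.

Lemma affine_letterV l : affmul (affine_letter l) (affine_letter (linv l)) = aff1.
Proof.
rewrite /affmul /= hom_letterV //; congr (_, _).
case: l => i [] /=; rewrite /letter_translation /=; first by rewrite addNr.
by rewrite mulmxN mulmxA (hom_letterV rho_hom rho_unit (i, false)) mul1mx subrr.
Qed.

Lemma affine_word_red w : affine_word (red w) = affine_word w.
Proof.
elim: w => //= l w <-; case: (red w) => [|y w'] //=.
by case: eqP => // ->; rewrite affmulA affine_letterV aff1mul.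
Qed.

Lemma affine_word_mul g h :
  affine_word (sval (F2mul g h)) = affmul (affine_word (sval g)) (affine_word (sval h)).
Proof.
rewrite /= affine_word_red.
by elim: (sval g) => [|l w IH] /=; rewrite ?aff1mul // IH affmulA.
Qed.

Lemma affine_word_linear g : (affine_word (sval g)).1 = rho g.
Proof.
elim/F2_letter_ind: g => [|l g IH]; first by rewrite hom_one.
by rewrite affine_word_mul /= IH mulmx1 rho_hom.
Qed.

Lemma cocycle_of_generators : exists u, [/\ cocycle rho u, u A1 = a & u A2 = b].
Proof.
exists (fun g => (affine_word (sval g)).2); split.
- by move=> g h; rewrite affine_word_mul /= affine_word_linear.
- by rewrite A1E /= mulmx0 addr0.
- by rewrite A2E /= mulmx0 addr0.
Qed.

End CocycleOfGenerators.

Definition lorentz_dual (R : realType) (p q r : 'cV[R]_3) : 'M[R]_3 :=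
  (colm (Jmx R *m p) (Jmx R *m q) (Jmx R *m r))^T.

Lemma lorentz_dualE (R : realType) (p q r a : 'cV[R]_3) :
  lorentz_dual p q r *m a = mkv (lor a p) (lor a q) (lor a r).
Proof.
have [p1 [p2 [p3 ->]]] := mkv_ex p; have [q1 [q2 [q3 ->]]] := mkv_ex q.
have [r1 [r2 [r3 ->]]] := mkv_ex r; have [a1 [a2 [a3 ->]]] := mkv_ex a.
rewrite /lorentz_dual; mk3_simpl; rewrite colm_mkv; mk3_simpl; congr mkv; ring.
Qed.

Lemma lorentz_dualTE (R : realType) (p q r : 'cV[R]_3) (z0 z1 z2 : R) :
  (lorentz_dual p q r)^T *m mkv z0 z1 z2 = Jmx R *m (z0 *: p + z1 *: q + z2 *: r).
Proof. by rewrite trmxK mul_colm_mkv !mulmxDr !scalemxAr. Qed.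

Lemma Agen0 : Agen (inord 0) = A1. Proof. by rewrite /Agen inordK. Qed.
Lemma Agen1 : Agen (inord 1) = A2. Proof. by rewrite /Agen inordK. Qed.
Lemma Agen2 : Agen (inord 2) = A3. Proof. by rewrite /Agen inordK. Qed.

Lemma mu_mkv (R : realType) (v : 'I_3 -> 'cV[R]_3) u :
  mu v u =
  mkv (lor (u A1) (v (inord 0))) (lor (u A2) (v (inord 1))) (lor (u A3) (v (inord 2))).
Proof.
apply/matrixP => i j; rewrite !mxE -Agen0 -Agen1 -Agen2.
by move: i; case_ord3; congr (lor (u (Agen _)) (v _)); apply: val_inj; rewrite /= inordK.
Qed.

Lemma mu_linear (R : realType) (v : 'I_3 -> 'cV[R]_3) (a : R) u u' :
  mu v (fun g => a *: u g + u' g) = a *: mu v u + mu v u'.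
Proof. by apply/matrixP => i j; rewrite !mxE lorDl lorZl. Qed.

Lemma muB (R : realType) (v : 'I_3 -> 'cV[R]_3) u u' :
  mu v (fun g => u g - u' g) = mu v u - mu v u'.
Proof. by apply/matrixP => i j; rewrite !mxE lorBl. Qed.

Section Mu.
Variable R : realType.
Variables (rho : F2 -> 'M[R]_3) (v : 'I_3 -> 'cV[R]_3).
Hypothesis rho_hom : is_hom rho.
Hypothesis rho_SO : forall g, SO21_0 (rho g).
Hypothesis no_common_fix : forall x : 'cV[R]_3, rho A1 *m x = x -> rho A2 *m x = x -> x = 0.
Hypothesis v_fix : forall i, rho (Agen i) *m v i = v i.
Hypothesis v_neq0 : forall i, v i != 0.

Let rho_unit g : rho g \in unitmx := SO21_unit (rho_SO g).
Local Notation v1 := (v (inord 0)).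
Local Notation v2 := (v (inord 1)).
Local Notation v3 := (v (inord 2)).
Local Notation w3 := (rho A2 *m v3).

Lemma mu_coboundary u : coboundary rho u -> mu v u = 0.
Proof.
by case=> x ux; apply/matrixP => i j; rewrite !mxE ux lorBl -{1}(v_fix i) lor_SO21 // subrr.
Qed.

Lemma A1A2_fix_v3 : rho A1 *m w3 = v3.
Proof.
rewrite -{1}[v3](v_fix (inord 2)) Agen2 (mulmxA (rho A2)) -rho_hom mulmxA -rho_hom.
by rewrite A1A2A3 hom_one // mul1mx.
Qed.

Lemma lor_cocycle_A3 u : cocycle rho u ->
  lor (u A3) v3 = lor (u A1) (- v3) + lor (u A2) (- w3).
Proof.
move=> Hu; pose a1' := F2letter (0, true); pose a2' := F2letter (1, true).
have rhoA3 : rho A3 = rho a2' *m rho a1' by rewrite A3E rho_hom.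
have a2'A2 : rho a2' *m rho A2 = 1%:M by rewrite A2E (hom_letterV _ _ (1, true)).
have [uA1' uA2'] : u a1' = - (rho a1' *m u A1) /\ u a2' = - (rho a2' *m u A2).
  by rewrite A1E A2E; split; apply: (cocycle_letterV _ _ (_, false)).
rewrite {1}A3E Hu uA1' uA2' mulmxN mulmxA -rhoA3 lorDl !lorNl !lorNr.
rewrite -{2}[v3](v_fix (inord 2)) Agen2 lor_SO21 //.
by rewrite -{1}[v3]mul1mx -a2'A2 -mulmxA lor_SO21 // addrC.
Qed.

Lemma fixed_vectors_relation (z0 z1 z2 : R) :
  z0 *: v1 = z2 *: v3 -> z1 *: v2 = z2 *: w3 -> [/\ z0 = 0, z1 = 0 & z2 = 0].
Proof.
move=> E1 E2; have [z2_0|z2_neq0] := eqVneq z2 0.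
  move: E1 E2; rewrite z2_0 !scale0r => /eqP + /eqP.
  by rewrite !scaler_eq0 !(negPf (v_neq0 _)) !orbF => /eqP-> /eqP->.
have A1v3 : rho A1 *m v3 = v3.
  have -> : v3 = (z2^-1 * z0) *: v1 by rewrite -scalerA E1 scalerA mulVf ?scale1r.
  by rewrite -scalemxAr -Agen0 v_fix.
have A2v3 : rho A2 *m v3 = v3.
  by apply: (can_inj (mulKmx (rho_unit A1))); rewrite A1A2_fix_v3 A1v3.
by case/eqP: (v_neq0 (inord 2)); apply: no_common_fix.
Qed.

Definition cocycle_dual : 'M[R]_(3, 3 + 3) :=
  row_mx (lorentz_dual v1 0 (- v3)) (lorentz_dual 0 v2 (- w3)).
Definition coboundary_mx : 'M[R]_(3 + 3, 3) := col_mx (rho A1 - 1%:M) (rho A2 - 1%:M).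

Lemma mu_cocycleE u : cocycle rho u -> mu v u = cocycle_dual *m col_mx (u A1) (u A2).
Proof.
move=> Hu; rewrite mu_mkv lor_cocycle_A3 // mul_row_col !lorentz_dualE !lorr0 add_mkv.
by congr mkv; rewrite ?addr0 ?add0r.
Qed.

Lemma coboundary_mxE (x : 'cV[R]_3) :
  coboundary_mx *m x = col_mx (rho A1 *m x - x) (rho A2 *m x - x).
Proof. by rewrite mul_col_mx !mulmxBl !mul1mx. Qed.

Lemma coboundary_mx_inj (x : 'cV[R]_3) : coboundary_mx *m x = 0 -> x = 0.
Proof.
rewrite coboundary_mxE => /eqP; rewrite col_mx_eq0 !subr_eq0 => /andP[/eqP x1 /eqP x2].
exact: no_common_fix.
Qed.

Lemma cocycle_dualT_inj (z : 'cV[R]_3) : cocycle_dual^T *m z = 0 -> z = 0.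
Proof.
have [z0 [z1 [z2 ->]]] := mkv_ex z; rewrite tr_row_mx mul_col_mx !lorentz_dualTE.
move=> /eqP; rewrite col_mx_eq0 => /andP[/eqP/Jmx_inj E1 /eqP/Jmx_inj E2].
have [||-> -> ->] := @fixed_vectors_relation z0 z1 z2; last exact: mkv000.
- by move/eqP: E1; rewrite scaler0 addr0 scalerN subr_eq0 => /eqP.
- by move/eqP: E2; rewrite scaler0 add0r scalerN subr_eq0 => /eqP.
Qed.

Lemma cocycle_dual_coboundary : cocycle_dual *m coboundary_mx = 0.
Proof.
apply: mulmx_cV_eq0 => x; rewrite -mulmxA coboundary_mxE.
by rewrite -(mu_cocycleE (coboundary_cocycle rho_hom x)) mu_coboundary //; exists x.
Qed.

Lemma cocycle_dual_exact :
  (forall t : 'cV[R]_3, exists w, cocycle_dual *m w = t) /\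
  (forall w : 'cV[R]_(3 + 3), cocycle_dual *m w = 0 -> exists x, w = coboundary_mx *m x).
Proof.
exact: injective_complex_exact coboundary_mx_inj cocycle_dualT_inj cocycle_dual_coboundary.
Qed.

Lemma mu_injective u : cocycle rho u -> mu v u = 0 -> coboundary rho u.
Proof.
move=> Hu /eqP; rewrite mu_cocycleE // => /eqP /cocycle_dual_exact.2[x].
rewrite coboundary_mxE => /eq_col_mx[ux1 ux2]; exists x => g; apply/subr0_eq.
apply: (cocycle_eq0 rho_hom rho_unit (cocycleB Hu (coboundary_cocycle rho_hom x))).
  by rewrite ux1 subrr.
by rewrite ux2 subrr.
Qed.

Lemma mu_surjective (t : 'cV[R]_3) : exists u, cocycle rho u /\ mu v u = t.
Proof.
have [w <-] := cocycle_dual_exact.1 t.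
have [u [Hu u1 u2]] := cocycle_of_generators rho_hom rho_unit (usubmx w) (dsubmx w).
by exists u; rewrite mu_cocycleE // u1 u2 vsubmxK.
Qed.
End Mu.

Unset Implicit Arguments. Set Strict Implicit.

Theorem lemma6p1 (R : realType) (rho0 : F2 -> 'M[R]_3) (v : 'I_3 -> 'cV[R]_3) :
  is_hom rho0 ->
  (forall g, SO21_0 (rho0 g)) ->
  (forall i : 'I_3, hyperbolic (rho0 (Agen i)) \/ parabolic (rho0 (Agen i))) ->
  ~ solvable_mx (image_rho rho0) ->
  (forall i : 'I_3, Fixv (rho0 (Agen i)) (v i) /\ positive_rel (rho0 (Agen i)) (v i)) ->
  [/\ (* well defined on H^1 *)
      (forall u u', cocycle rho0 u -> cocycle rho0 u' ->
          coboundary rho0 (fun g => u g - u' g) -> mu v u = mu v u'),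
      (* linear *)
      (forall (a : R) u u', mu v (fun g => a *: u g + u' g) = a *: mu v u + mu v u'),
      (* injective on H^1 *)
      (forall u, cocycle rho0 u -> mu v u = 0 -> coboundary rho0 u) &
      (* surjective *)
      (forall t : 'cV[R]_3, exists u, cocycle rho0 u /\ mu v u = t)].
Proof.
move=> rho_hom rho_SO rho_type nonsolv Hv.
have v_fix i : rho0 (Agen i) *m v i = v i := (Hv i).1.
have v_neq0 i : v i != 0.
  by apply: (positive_rel_neq0 (rho_SO _) _ (Hv i).2); case: (rho_type i) => -[].
have no_fix := nonsolvable_no_common_fix rho_hom rho_SO nonsolv.
split.
- move=> u u' _ _ /(mu_coboundary rho_SO v_fix).
  by rewrite muB => /eqP; rewrite subr_eq0 => /eqP.
- exact: mu_linear.
- exact: (mu_injective rho_hom rho_SO no_fix v_fix v_neq0).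
- exact: (mu_surjective rho_hom rho_SO no_fix v_fix v_neq0).
Qed.
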